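(* Let $Q\in\mathbb{R}^{n\times n}$ be any symmetric matrix (not necessarily definite), $\mathcal{S}=\{x\in\mathbb{R}^n: x^TQx\le1\}$, and $A\in\mathbb{R}^{n\times n}$. Then $\mathcal{S}$ is an invariant set for the discrete system $x_{k+1}=Ax_k$ (i.e., $A\mathcal{S}\subseteq\mathcal{S}$) if and only if there exists $\mu\in[0,1]$ such that $A^TQA-\mu Q\preceq0$.
   Context: $\preceq 0$ denotes negative semidefiniteness of a symmetric matrix. *)

(* real numbers as an arbitrary real closed field R. *)
From HB Require Import structures.
From mathcomp Require Import all_boot all_order all_algebra.
Set Implicit Arguments. Unset Strict Implicit. Unset Printing Implicit Defensive.
Import Order.TTheory GRing.Theory Num.Theory.
Local Open Scope ring_scope.

Definition qform (R : rcfType) (n : nat) (M : 'M[R]_n) (x : 'cV[R]_n) : R :=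
  (x^T *m M *m x) 0 0.

Definition neg_semidef (R : rcfType) (n : nat) (M : 'M[R]_n) : Prop :=
  forall x : 'cV[R]_n, qform M x <= 0.

Definition sublevel1 (R : rcfType) (n : nat) (Q : 'M[R]_n) : 'cV[R]_n -> Prop :=
  fun x => qform Q x <= 1.

Definition invariant_set (R : rcfType) (n : nat) (A : 'M[R]_n)
  (S : 'cV[R]_n -> Prop) : Prop :=
  forall x, S x -> S (A *m x).

(* With P := A^T Q A, invariance of the sublevel set says qform Q x <= 1 -> qform P x <= 1,
   which by homogeneity means: qform P x <= 0 where qform Q x <= 0, and
   qform P x <= qform Q x where qform Q x > 0.  A suitable mu must lie above 0 and every ratio
   qform P x / qform Q x with qform Q x > 0, and below 1 and every such ratio with
   qform Q x < 0.  These two families are ordered: the line s x + y through x with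
   qform Q x > 0 and y with qform Q y < 0 crosses the cone qform Q = 0 at parameters
   s1 < 0 < s2, where qform P <= 0, and the resulting affine inequality in s, read at s = 0,
   compares the ratios at x and y.  So mu can be the supremum of the first family.  It exists
   in any real closed field because the family is semialgebraic: by quantifier elimination its
   membership is a quantifier-free formula in one variable, whose truth value changes only at
   the finitely many roots of the polynomials involved. *)

From HB Require Import structures.
From mathcomp Require Import all_boot all_order all_algebra.
From mathcomp Require polyrcf qe_rcf ordered_qelim.
From mathcomp Require Import ring lra.
From Stdlib Require Import Classical.
Set Implicit Arguments. Unset Strict Implicit. Unset Printing Implicit Defensive.
Import Order.TTheory GRing.Theory Num.Theory.
Local Open Scope ring_scope.

Section PiecewiseConstant.
Variable R : realFieldType.
Implicit Types (rs : seq R) (t u c : R) (G : R -> Prop).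

Definition avoids rs t1 t2 := all (fun r => (r < t1) || (t2 < r)) rs.

Definition piecewise_const (T : Type) (F : R -> T) :=
  exists rs, forall t1 t2, t1 <= t2 -> avoids rs t1 t2 -> F t1 = F t2.

Lemma eq_piecewise_const T (F1 F2 : R -> T) :
  F1 =1 F2 -> piecewise_const F1 -> piecewise_const F2.
Proof. by move=> eF [rs Frs]; exists rs => t1 t2; rewrite -!eF; apply: Frs. Qed.

Lemma piecewise_const_cst T (a : T) : piecewise_const (fun=> a).
Proof. by exists [::]. Qed.

Lemma piecewise_const_comp T1 T2 (g : T1 -> T2) (F : R -> T1) :
  piecewise_const F -> piecewise_const (g \o F).
Proof. by case=> rs Frs; exists rs => t1 t2 le12 /(Frs _ _ le12) /= ->. Qed.

Lemma piecewise_const2 T1 T2 T3 (op : T1 -> T2 -> T3) F1 F2 :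
  piecewise_const F1 -> piecewise_const F2 ->
  piecewise_const (fun t => op (F1 t) (F2 t)).
Proof.
case=> rs1 Frs1 [rs2 Frs2]; exists (rs1 ++ rs2) => t1 t2 le12.
by rewrite /avoids all_cat => /andP[/(Frs1 _ _ le12) -> /(Frs2 _ _ le12) ->].
Qed.

Definition ubound G c := forall t, G t -> t <= c.

Definition is_sup G c := ubound G c /\ forall u, u < c -> exists2 t, G t & u < t.

Lemma not_ubound_gt G c : ~ ubound G c -> exists2 t, G t & c < t.
Proof.
move=> not_ub; apply: NNPP => no_t; apply: not_ub => t Gt.
by rewrite leNgt; apply/negP => ct; apply: no_t; exists t.
Qed.

Lemma exists_above_all G rs : (exists t, G t) ->
    (forall r, r \in rs -> exists2 t, G t & r < t) ->
  exists2 t, G t & forall r, r \in rs -> r < t.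
Proof.
move=> [t0 Gt0]; elim: rs => [|a rs IH] above; first by exists t0.
have [t Gt rs_lt] := IH (fun r r_rs => above r (@mem_behead _ (a :: rs) r r_rs)).
have [ta Gta a_lt] := above a (mem_head _ _).
have [t_ta|ta_t] := leP t ta.
  exists ta => // r; rewrite inE => /predU1P[-> //|/rs_lt rt].
  exact: lt_le_trans t_ta.
exists t => // r; rewrite inE => /predU1P[->|/rs_lt //].
exact: lt_trans ta_t.
Qed.

Lemma exists_min_in (P : R -> Prop) rs : (exists2 r, r \in rs & P r) ->
  exists2 c, c \in rs & P c /\ forall r, r \in rs -> P r -> c <= r.
Proof.
elim: rs => [[r] //|a rs IH] [r]; rewrite inE => r_ars Pr.
case: (classic (exists2 r, r \in rs & P r)) => [/IH [c c_rs [Pc c_min]]|none].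
  case: (classic (P a /\ a < c)) => [[Pa ac]|not_ac].
    exists a; first exact: mem_head.
    split=> // s; rewrite inE => /predU1P[-> //|s_rs /(c_min s s_rs)].
    exact/le_trans/ltW.
  exists c; first by rewrite inE c_rs orbT.
  split=> // s; rewrite inE => /predU1P[-> Pa|s_rs]; last exact: c_min.
  by rewrite leNgt; apply/negP => ac; apply: not_ac.
have Pa : P a by case/predU1P: r_ars => [<- //|r_rs]; case: none; exists r.
exists a; first exact: mem_head.
split=> // s; rewrite inE => /predU1P[-> //|s_rs Ps].
by case: none; exists s.
Qed.

Section PiecewiseSup.
Variables (G : R -> Prop) (rs : seq R).
Hypothesis G_right : forall t1 t2, t1 <= t2 -> avoids rs t1 t2 -> G t1 -> G t2.
Hypothesis G_nonempty : exists t, G t.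
Hypothesis G_bounded : exists B, ubound G B.

Lemma ubound_breakpoint : exists2 r, r \in rs & ubound G r.
Proof.
apply: NNPP => no_ub.
have [g Gg rs_lt] : exists2 g, G g & forall r, r \in rs -> r < g.
  apply: (exists_above_all G_nonempty) => r r_rs.
  by apply: not_ubound_gt => ub_r; apply: no_ub; exists r.
have [B ubB] := G_bounded.
have gB1 : g <= B + 1 by rewrite (le_trans (ubB g Gg)) ?lerDl.
have : G (B + 1).
  apply: (G_right gB1 _ Gg).
  by apply/allP => r /rs_lt ->.
by move/ubB; rewrite gerDl ler10.
Qed.

Lemma piecewise_sup : exists c, is_sup G c.
Proof.
have [c c_rs [ub_c c_min]] := exists_min_in ubound_breakpoint.
exists c; split=> // u uc; apply: NNPP => no_t.
have ub_u : ubound G u.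
  by move=> t Gt; rewrite leNgt; apply/negP => ut; apply: no_t; exists t.
have [g Gg below_lt] :
    exists2 g, G g & forall r, r \in [seq r <- rs | r < c] -> r < g.
  apply: (exists_above_all G_nonempty) => r; rewrite mem_filter => /andP[rc r_rs].
  apply: not_ubound_gt => ub_r.
  by move: (c_min r r_rs ub_r); rewrite leNgt rc.
have [uv vc] := midf_lt uc; set v := (u + c) / 2 in uv vc.
have : G v.
  apply: (G_right (le_trans (ub_u g Gg) (ltW uv)) _ Gg).
  apply/allP => r r_rs; have [rc|cr] := ltP r c.
    by rewrite below_lt // mem_filter rc.
  by rewrite (lt_le_trans vc cr) orbT.
by move/ub_u; rewrite leNgt uv.
Qed.

End PiecewiseSup.
End PiecewiseConstant.

Section Definable.
Variable R : rcfType.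
Import ordered_qelim.ord.

Definition definable (G : R -> Prop) :=
  exists (e : seq R) (f : formula R), forall t, G t <-> holds (t :: e) f.

Lemma horner_sgr_piecewise_const (p : {poly R}) :
  piecewise_const (fun t => Num.sg p.[t]).
Proof.
have [->|p0] := eqVneq p 0; first by exists [::] => *; rewrite !horner0.
pose b := polyrcf.cauchy_bound p.
exists (polyrcf.roots p (- b) b) => t1 t2 le12 avoid.
have noroot : {in `[t1, t2], forall x, ~~ root p x}.
  move=> x; rewrite in_itv /= => /andP[t1x xt2]; apply/negP => px.
  have := polyrcf.root_in_roots p0 (polyrcf.root_in_cauchy_bound p0 px) px.
  by move/(allP avoid); rewrite !ltNge t1x xt2.
by symmetry; apply: (polyrcf.polyrN0_itv noroot); rewrite in_itv /= ?lexx ?le12.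
Qed.

Lemma rterm_horner (e : seq R) (u : GRing.term R) : GRing.rterm u ->
  exists p : {poly R}, forall t, GRing.eval (t :: e) u = p.[t].
Proof.
elim: u => /=.
- case=> [|i] _; first by exists 'X => t; rewrite hornerX.
  by exists (e`_i)%:P => t; rewrite hornerC.
- by move=> c _; exists c%:P => t; rewrite hornerC.
- by move=> k _; exists k%:R%:P => t; rewrite hornerC.
- move=> u1 IH1 u2 IH2 /andP[/IH1 [p1 E1] /IH2 [p2 E2]].
  by exists (p1 + p2) => t; rewrite hornerD E1 E2.
- by move=> u1 IH1 /IH1 [p1 E1]; exists (- p1) => t; rewrite hornerN E1.
- by move=> u1 IH1 k /IH1 [p1 E1]; exists (p1 *+ k) => t; rewrite hornerMn E1.
- move=> u1 IH1 u2 IH2 /andP[/IH1 [p1 E1] /IH2 [p2 E2]].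
  by exists (p1 * p2) => t; rewrite hornerM E1 E2.
- by [].
- by move=> u1 IH1 k /IH1 [p1 E1]; exists (p1 ^+ k) => t; rewrite horner_exp E1.
Qed.

Lemma qf_eval_piecewise_const (e : seq R) (f : formula R) :
  qf_form f -> rformula f -> piecewise_const (fun t => qf_eval (t :: e) f).
Proof.
have sgB u v : GRing.rterm u -> GRing.rterm v ->
    piecewise_const (fun t => Num.sg (GRing.eval (t :: e) v - GRing.eval (t :: e) u)).
  move=> ru rv; have /(rterm_horner e) [p Ep] : GRing.rterm (v - u)%oT by rewrite /= rv ru.
  have [rs Hrs] := horner_sgr_piecewise_const p.
  by exists rs => t1 t2 le12 /(Hrs _ _ le12); rewrite -!Ep.
elim: f => //=; try by move=> f1 IH1 f2 IH2 /andP[q1 q2] /andP[r1 r2];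
  apply: piecewise_const2 (IH1 q1 r1) (IH2 q2 r2).
- by move=> b _ _; apply: piecewise_const_cst.
- move=> u v _ /andP[ru rv].
  apply: eq_piecewise_const (piecewise_const_comp (eq_op^~ 0) (sgB u v ru rv)).
  by move=> t /=; rewrite sgr_eq0 subr_eq0 eq_sym.
- move=> u v _ /andP[ru rv].
  apply: eq_piecewise_const (piecewise_const_comp (Order.lt 0) (sgB u v ru rv)).
  by move=> t /=; rewrite sgr_gt0 subr_gt0.
- move=> u v _ /andP[ru rv].
  apply: eq_piecewise_const (piecewise_const_comp (Order.le 0) (sgB u v ru rv)).
  by move=> t /=; rewrite sgr_ge0 subr_ge0.
- by move=> f1 IH1 q1 r1; exact: (piecewise_const_comp negb (IH1 q1 r1)).
Qed.

Lemma rcf_sat_piecewise_const (e : seq R) (f : formula R) :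
  piecewise_const (fun t => qe_rcf.rcf_sat (t :: e) f).
Proof.
have /andP[qf rf] :=
  quantifier_elim_wf (@qe_rcf.wf_QE_wproj R) (to_rform_rformula f).
exact: qf_eval_piecewise_const qf rf.
Qed.

Lemma definable_sup (G : R -> Prop) : definable G ->
  (exists t, G t) -> (exists B, ubound G B) -> exists c, is_sup G c.
Proof.
move=> [e [f Gf]]; have [rs Hrs] := rcf_sat_piecewise_const e f.
apply: (@piecewise_sup _ G rs) => t1 t2 le12 avoid /Gf /qe_rcf.rcf_satP.
by rewrite (Hrs _ _ le12 avoid) => /qe_rcf.rcf_satP /Gf.
Qed.

End Definable.

Section QuadraticForms.
Variables (R : rcfType) (n : nat).
Implicit Types (M P Q A : 'M[R]_n) (x y : 'cV[R]_n).

Lemma qformE M x :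
  qform M x = \sum_(ij : 'I_n * 'I_n) M ij.1 ij.2 * x ij.1 0 * x ij.2 0.
Proof.
rewrite /qform mxE -(pair_big xpredT xpredT (fun i j => M i j * x i 0 * x j 0)) /=.
rewrite exchange_big /=; apply: eq_bigr => j _.
rewrite mxE big_distrl /=; apply: eq_bigr => i _.
by rewrite mxE mulrAC mulrC mulrA.
Qed.

Lemma qform_mulmx Q A x : qform Q (A *m x) = qform (A^T *m Q *m A) x.
Proof. by rewrite /qform trmx_mul !mulmxA. Qed.

Lemma qformBZ P Q mu x : qform (P - mu *: Q) x = qform P x - mu * qform Q x.
Proof. by rewrite /qform mulmxBr mulmxBl -scalemxAr -scalemxAl !mxE. Qed.

Definition qform_cross M x y := (x^T *m M *m y) 0 0 + (y^T *m M *m x) 0 0.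

Lemma qform_scale_add M s x y :
  qform M (s *: x + y) = qform M x * s ^+ 2 + qform_cross M x y * s + qform M y.
Proof.
rewrite /qform /qform_cross [(s *: x + y)^T]raddfD /= [(s *: x)^T]linearZ /=.
rewrite !mulmxDl !mulmxDr -!scalemxAl -!scalemxAr !mxE; ring.
Qed.

Lemma qformZ M s x : qform M (s *: x) = s ^+ 2 * qform M x.
Proof.
by rewrite /qform linearZ [(s *: x)^T]linearZ /= -!scalemxAl !mxE mulrA -expr2.
Qed.

Definition qterm M : GRing.term R :=
  (\big[GRing.Add/0]_(ij : 'I_n * 'I_n) ((M ij.1 ij.2)%:T * 'X_ij.1.+1 * 'X_ij.2.+1))%T.

Lemma eval_qterm (e : seq R) x M :
  (forall i : 'I_n, e`_i.+1 = x i 0) -> GRing.eval e (qterm M) = qform M x.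
Proof.
move=> ex; rewrite qformE /qterm (big_morph (GRing.eval e) (id1 := 0) (op1 := +%R)) //.
by apply: eq_bigr => ij _ /=; rewrite !ex.
Qed.

Definition qform_ratio P Q (t : R) :=
  t = 0 \/ exists2 x, 0 < qform Q x & t * qform Q x = qform P x.

End QuadraticForms.

Section RatioDefinable.
Variable R : rcfType.
Import ordered_qelim.ord.

Lemma holds_exists_iota (e : seq R) m (f : formula R) :
  holds e (foldr (@Exists R) f (iota (size e) m)) <->
  exists2 s, size s = m & holds (e ++ s) f.
Proof.
elim: m e => [|m IH] e /=.
  split=> [fe|[s /size0nil ->]]; last by rewrite cats0.
  by exists [::]; rewrite ?cats0.
have set_last x : set_nth 0 e (size e) x = rcons e x by elim: e {IH} => //= a e ->.
split=> [[x]|[[|x s] //= [size_s] fs]].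
  rewrite set_last -(size_rcons e x) => /(IH (rcons e x)) [s size_s fs].
  by exists (x :: s); rewrite /= ?size_s // -cat_rcons.
exists x; rewrite set_last -(size_rcons e x); apply/(IH (rcons e x)).
by exists s; rewrite ?cat_rcons.
Qed.

Variable n : nat.

(* Variable [0] stands for the ratio [t], variable [i.+1] for the coordinate [x i 0]. *)
Definition ratio_formula (P Q : 'M[R]_n) : formula R :=
  ('X_0 == 0 \/ foldr (@Exists R) (0 <% qterm Q /\ 'X_0 * qterm Q == qterm P) (iota 1 n))%oT.

Lemma qform_ratio_definable (P Q : 'M[R]_n) : definable (qform_ratio P Q).
Proof.
exists [::], (ratio_formula P Q) => t; rewrite /qform_ratio /=.
apply: or_iff_compat_l; rewrite (holds_exists_iota [:: t]) /=.
split=> [[x Qx Px]|[s size_s]].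
  exists [seq x i 0 | i <- enum 'I_n]; first by rewrite size_map size_enum_ord.
  have ex (i : 'I_n) : (t :: [seq x i 0 | i <- enum 'I_n])`_i.+1 = x i 0.
    by rewrite /= (nth_map i) ?size_enum_ord // nth_ord_enum.
  by rewrite !(eval_qterm _ ex).
pose x := \col_(i < n) s`_i.
have ex (i : 'I_n) : (t :: s)`_i.+1 = x i 0 by rewrite mxE.
by rewrite !(eval_qterm _ ex) => -[]; exists x.
Qed.

End RatioDefinable.

Lemma quadratic_roots_opp_sign (R : rcfType) (a b c : R) : 0 < a -> c < 0 ->
  exists s1 s2, [/\ s1 < 0, 0 < s2,
    a * s1 ^+ 2 + b * s1 + c = 0 & a * s2 ^+ 2 + b * s2 + c = 0].
Proof.
move=> a_gt0 c_lt0; set d := b ^+ 2 - 4 * a * c.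
have d_gt0 : 0 < d by rewrite /d; nra.
set r := Num.sqrt d.
have r2 : r ^+ 2 = d by rewrite sqr_sqrtr // ltW.
have b_lt : `|b| < r by rewrite -sqrtr_sqr ltr_sqrt // /d; nra.
have b_lt_r : b < r := le_lt_trans (ler_norm b) b_lt.
have nb_lt_r : - b < r by rewrite (le_lt_trans (ler_norm _)) ?normrN.
have a2_neq0 : 2 * a != 0 by rewrite mulf_neq0 ?pnatr_eq0 ?gt_eqF.
have root s : (2 * a * s + b) ^+ 2 = r ^+ 2 -> a * s ^+ 2 + b * s + c = 0.
  have -> : (2 * a * s + b) ^+ 2 = r ^+ 2 + 4 * a * (a * s ^+ 2 + b * s + c).
    by rewrite r2 /d; ring.
  rewrite -{2}[r ^+ 2]addr0 => /addrI /eqP.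
  by rewrite !mulf_eq0 pnatr_eq0 (gt_eqF a_gt0) /= => /eqP.
exists ((- b - r) / (2 * a)), ((- b + r) / (2 * a)); split.
- by rewrite ltr_pdivrMr ?mulr_gt0 // mul0r subr_lt0.
- by rewrite ltr_pdivlMr ?mulr_gt0 // mul0r addrC subr_gt0.
- by apply: root; rewrite [2 * a * _]mulrC divfK //; ring.
- by apply: root; rewrite [2 * a * _]mulrC divfK //; ring.
Qed.

Section SublevelInvariance.
Variables (R : rcfType) (n : nat) (P Q : 'M[R]_n).

Lemma qform_ratio_sep x y :
    (forall z, qform Q z <= 0 -> qform P z <= 0) ->
    0 < qform Q x -> qform Q y < 0 ->
  qform P y * qform Q x <= qform P x * qform Q y.
Proof.
move=> nonpos Qx Qy.
have [s1 [s2 [s1_lt0 s2_gt0 root1 root2]]] :=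
  quadratic_roots_opp_sign (qform_cross Q x y) Qx Qy.
pose h s := qform Q x * qform P (s *: x + y) - qform P x * qform Q (s *: x + y).
have h_le0 s : qform Q (s *: x + y) = 0 -> h s <= 0.
  by move=> Q0; rewrite /h Q0 mulr0 subr0 pmulr_rle0 // nonpos ?Q0.
have h_affine s : h s = (qform Q x * qform_cross P x y - qform P x * qform_cross Q x y) * s
                        + (qform Q x * qform P y - qform P x * qform Q y).
  by rewrite /h !qform_scale_add; ring.
(* [h] is affine and nonpositive at [s1 < 0 < s2], hence at [0]. *)
have := h_le0 s1; have := h_le0 s2; rewrite !h_affine !qform_scale_add root1 root2.
move=> /(_ erefl) h2 /(_ erefl) h1; nra.
Qed.

Lemma sup_qform_ratio_le c x :
    (forall z, qform Q z <= 0 -> qform P z <= 0) -> is_sup (qform_ratio P Q) c ->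
  qform Q x < 0 -> qform P x <= c * qform Q x.
Proof.
move=> nonpos [_ c_lub] Qx; rewrite -ler_ndivlMr // leNgt.
apply/negP => /c_lub [t [->|[y Qy tQy]]].
  by rewrite ltNge mulr_le0 ?nonpos ?invr_le0 // ltW.
rewrite ltr_ndivrMr // => lt_t.
have := qform_ratio_sep nonpos Qy Qx; rewrite -tQy; nra.
Qed.

Section SublevelLe1.
Hypothesis P_le1 : forall x, qform Q x <= 1 -> qform P x <= 1.

Lemma sublevel_nonpos x : qform Q x <= 0 -> qform P x <= 0.
Proof.
move=> Qx; rewrite leNgt; apply/negP => Px.
(* Scaling by [s >= 1] keeps [x] in the sublevel set but pushes [qform P] above 1. *)
pose s := 1 + (qform P x)^-1.
have s_ge1 : 1 <= s by rewrite /s lerDl invr_ge0 ltW.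
have sPx : s * qform P x = qform P x + 1 by rewrite /s mulrDl mul1r mulVf ?gt_eqF.
have := @P_le1 (s *: x); rewrite !qformZ; nra.
Qed.

Lemma sublevel_le_pos x : 0 < qform Q x -> qform P x <= qform Q x.
Proof.
move=> Qx; pose s := (Num.sqrt (qform Q x))^-1.
have s2 : s ^+ 2 = (qform Q x)^-1 by rewrite /s exprVn sqr_sqrtr // ltW.
have := @P_le1 (s *: x); rewrite !qformZ s2 mulVf ?gt_eqF // lexx => /(_ isT).
by rewrite mulrC ler_pdivrMr // mul1r.
Qed.

Lemma qform_ratio_le1 t : qform_ratio P Q t -> t <= 1.
Proof.
case=> [->|[x Qx Px]]; first exact: ler01.
by rewrite -(ler_pM2r Qx) mul1r Px sublevel_le_pos.
Qed.

Lemma sublevel_le1_mu :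
  exists2 mu, 0 <= mu <= 1 & forall x, qform P x <= mu * qform Q x.
Proof.
have [c c_sup] : exists c, is_sup (qform_ratio P Q) c.
  apply: definable_sup (qform_ratio_definable P Q) _ _; first by exists 0; left.
  by exists 1; apply: qform_ratio_le1.
have [ub_c lub_c] := c_sup.
have c_ge0 : 0 <= c by apply: ub_c; left.
have c_le1 : c <= 1.
  by rewrite leNgt; apply/negP => /lub_c [t /qform_ratio_le1]; rewrite leNgt => /negP.
exists c; first by rewrite c_ge0 c_le1.
move=> x; have [Qx|Qx|Qx] := ltgtP (qform Q x) 0.
- exact: sup_qform_ratio_le sublevel_nonpos c_sup Qx.
- by rewrite -ler_pdivrMr // ub_c //; right; exists x; rewrite ?divfK ?gt_eqF.
- by rewrite Qx mulr0 sublevel_nonpos ?Qx.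
Qed.

End SublevelLe1.

Lemma sublevel_le1_iff :
  (forall x, qform Q x <= 1 -> qform P x <= 1) <->
  exists2 mu, 0 <= mu <= 1 & forall x, qform P x <= mu * qform Q x.
Proof.
split=> [|[mu /andP[mu_ge0 mu_le1] P_le] x Qx]; first exact: sublevel_le1_mu.
by have := P_le x; have [Q_ge0|Q_lt0] := leP 0 (qform Q x); nra.
Qed.

End SublevelInvariance.

Theorem theorem3p13 (R : rcfType) (n : nat) (Q A : 'M[R]_n) (hQ : Q^T = Q) :
  invariant_set A (sublevel1 Q) <->
  exists mu : R, 0 <= mu <= 1 /\ neg_semidef (A^T *m Q *m A - mu *: Q).
Proof.
have nsdE mu : neg_semidef (A^T *m Q *m A - mu *: Q) <->
    forall x, qform (A^T *m Q *m A) x <= mu * qform Q x.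
  by split=> nsd x; have := nsd x; rewrite qformBZ subr_le0.
have invE : invariant_set A (sublevel1 Q) <->
    forall x, qform Q x <= 1 -> qform (A^T *m Q *m A) x <= 1.
  by split=> inv x /inv; rewrite /sublevel1 qform_mulmx.
rewrite invE sublevel_le1_iff.
by split=> [[mu mu01 /nsdE nsd]|[mu [mu01 /nsdE le_mu]]]; exists mu.
Qed.
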